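(* Let $(A,* )$ be an involutive associative algebra, $(M,* )$ an involutive $A$-bimodule, and $T:M\to A$ a relative Rota-Baxter operator on $A$ with respect to $M$. Then the maps $l_T:M\otimes A\to A$, $l_T(u,a)=T(u)a-T(ua)$, and $r_T:A\otimes M\to A$, $r_T(a,u)=aT(u)-T(au)$, define (as left and right actions respectively) an involutive bimodule structure on $(A,* )$ over the involutive associative algebra $(M,\circledast,* )$, where $u\circledast v=uT(v)+T(u)v$.
   Context: An involutive associative algebra is an associative algebra $A$ with a linear map $*:A\to A$ satisfying $a^{**}=a$ and $(ab)^*=b^*a^*$. An involutive $A$-bimodule is an $A$-bimodule $M$ with a linear map $*:M\to M$ such that $u^{**}=u$, $(au)^*=u^*a^*$, $(ua)^*=a^*u^*$. A relative Rota-Baxter operator on $A$ with respect to $M$ is a linear map $T:M\to A$ with $T(u^* )=T(u)^*$ and $T(u)T(v)=T(uT(v)+T(u)v)$ for $u,v\in M$; in this situation $(M,\circledast,* )$ is an involutive associative algebra. An involutive bimodule over an involutive algebra $(N,* )$ is an $N$-bimodule $P$ with an involution satisfying $(xp)^*=p^*x^*$, $(px)^*=x^*p^*$ for $x\in N$, $p\in P$. *)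

From HB Require Import structures.
From mathcomp Require Import all_boot all_algebra.
Set Implicit Arguments. Unset Strict Implicit. Unset Printing Implicit Defensive.
Import GRing.Theory.
Local Open Scope ring_scope.

(* All structures are vector spaces over a field K; multiplications and
   actions are given as explicit maps (algebras are not assumed unital). *)
Section Defs.
Variable K : fieldType.

Definition is_linear (U V : lmodType K) (f : U -> V) : Prop :=
  forall (k : K) (x y : U), f (k *: x + y) = k *: f x + f y.

Definition is_bilinear (U V W : lmodType K) (f : U -> V -> W) : Prop :=
  (forall y : V, is_linear (fun x => f x y)) /\ (forall x : U, is_linear (f x)).

Definition assoc_algebra (A : lmodType K) (mul : A -> A -> A) : Prop :=
  is_bilinear mul /\ (forall a b c, mul a (mul b c) = mul (mul a b) c).

Definition involutive_algebra (A : lmodType K) (mul : A -> A -> A)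
  (star : A -> A) : Prop :=
  [/\ assoc_algebra mul, is_linear star, (forall a, star (star a) = a)
    & (forall a b, star (mul a b) = mul (star b) (star a))].

Definition bimodule (N : lmodType K) (mul : N -> N -> N) (M : lmodType K)
  (lact : N -> M -> M) (ract : M -> N -> M) : Prop :=
  [/\ is_bilinear lact, is_bilinear ract,
      (forall a b u, lact (mul a b) u = lact a (lact b u)),
      (forall a b u, ract u (mul a b) = ract (ract u a) b)
    & (forall a b u, ract (lact a u) b = lact a (ract u b))].

Definition involutive_bimodule (N : lmodType K) (mul : N -> N -> N)
  (starN : N -> N) (M : lmodType K) (lact : N -> M -> M) (ract : M -> N -> M)
  (starM : M -> M) : Prop :=
  [/\ bimodule mul lact ract, is_linear starM, (forall u, starM (starM u) = u),
      (forall a u, starM (lact a u) = ract (starM u) (starN a))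
    & (forall a u, starM (ract u a) = lact (starN a) (starM u))].

Definition relative_RB (A : lmodType K) (mul : A -> A -> A) (starA : A -> A)
  (M : lmodType K) (lact : A -> M -> M) (ract : M -> A -> M) (starM : M -> M)
  (T : M -> A) : Prop :=
  [/\ is_linear T, (forall u, T (starM u) = starA (T u))
    & (forall u v, mul (T u) (T v) = T (ract u (T v) + lact (T u) v))].

Definition RB_mul (A M : lmodType K) (lact : A -> M -> M) (ract : M -> A -> M)
  (T : M -> A) (u v : M) : M := ract u (T v) + lact (T u) v.

Definition lT (A M : lmodType K) (mul : A -> A -> A) (ract : M -> A -> M)
  (T : M -> A) (u : M) (a : A) : A := mul (T u) a - T (ract u a).

Definition rT (A M : lmodType K) (mul : A -> A -> A) (lact : A -> M -> M)
  (T : M -> A) (a : A) (u : M) : A := mul a (T u) - T (lact a u).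

End Defs.

From mathcomp Require Import all_boot all_algebra.
Import GRing.Theory.
Set Implicit Arguments.
Unset Strict Implicit.
Unset Printing Implicit Defensive.

(* Each bimodule identity is a direct expansion of l_T and r_T in which the
   Rota-Baxter identity T(u) T(w) = T(u ⊛ w) is used once on each side: the
   term T(u T(w)) or T(T(u) w) it creates on one side cancels against a term of
   the other side, and the remaining terms agree by the associativity and
   bimodule axioms.  Compatibility with the involutions holds because * reverses
   products, exchanges the two actions on M and commutes with T. *)

Local Open Scope ring_scope.

Section IsLinear.
Variables (K : fieldType) (U V : lmodType K).

Lemma is_linear0 (f : U -> V) : is_linear f -> f 0 = 0.
Proof.
move=> f_lin; have := f_lin 1 0 0; rewrite !scale1r !addr0 => f00.
by apply: (@addrI _ (f 0)); rewrite addr0 -f00.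
Qed.

Lemma is_linearD (f : U -> V) : is_linear f -> forall x y, f (x + y) = f x + f y.
Proof. by move=> f_lin x y; rewrite -[x in LHS]scale1r f_lin scale1r. Qed.

Lemma is_linearB (f : U -> V) : is_linear f -> forall x y, f (x - y) = f x - f y.
Proof.
move=> f_lin x y; have fN : f (- y) = - f y.
  by apply: (@addrI _ (f y)); rewrite -is_linearD // !subrr is_linear0.
by rewrite is_linearD // fN.
Qed.

Lemma is_linear_diff (f g : U -> V) :
  is_linear f -> is_linear g -> is_linear (fun x => f x - g x).
Proof.
by move=> f_lin g_lin k x y; rewrite f_lin g_lin scalerBr opprD addrACA.
Qed.

End IsLinear.

Section IsBilinear.
Variables (K : fieldType) (U V W : lmodType K) (f : U -> V -> W).
Hypothesis f_bilin : is_bilinear f.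

Lemma is_bilinearDl x y z : f (x + y) z = f x z + f y z.
Proof. exact: (is_linearD (proj1 f_bilin z) x y). Qed.

Lemma is_bilinearDr x y z : f x (y + z) = f x y + f x z.
Proof. exact: (is_linearD (proj2 f_bilin x) y z). Qed.

Lemma is_bilinearBl x y z : f (x - y) z = f x z - f y z.
Proof. exact: (is_linearB (proj1 f_bilin z) x y). Qed.

Lemma is_bilinearBr x y z : f x (y - z) = f x y - f x z.
Proof. exact: (is_linearB (proj2 f_bilin x) y z). Qed.

End IsBilinear.

Lemma subrDBKl (V : zmodType) (x y z w : V) : x - (y + z) - (w - y) = x - (w + z).
Proof. by rewrite opprB addrAC addrA [x + y - w]addrAC addrKA -addrA -opprD. Qed.

Lemma subrDBKr (V : zmodType) (x y z w : V) : x - (y + z) - (w - z) = x - (y + w).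
Proof. by rewrite [y + z]addrC subrDBKl [w + y]addrC. Qed.

Section RotaBaxterBimodule.
Variables (K : fieldType) (A M : lmodType K).
Variables (mulA : A -> A -> A) (starA : A -> A).
Variables (lact : A -> M -> M) (ract : M -> A -> M) (starM : M -> M).
Variable T : M -> A.

Local Notation "u ⊛ v" := (RB_mul lact ract T u v) (at level 40).
Local Notation l_T := (lT mulA ract T).
Local Notation r_T := (rT mulA lact T).

Hypothesis mulA_bilin : is_bilinear mulA.
Hypothesis lact_bilin : is_bilinear lact.
Hypothesis ract_bilin : is_bilinear ract.
Hypothesis T_lin : is_linear T.
Hypothesis mulA_assoc : forall a b c, mulA a (mulA b c) = mulA (mulA a b) c.
Hypothesis lact_mul : forall a b u, lact (mulA a b) u = lact a (lact b u).
Hypothesis ract_mul : forall a b u, ract u (mulA a b) = ract (ract u a) b.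
Hypothesis lact_ract : forall a b u, ract (lact a u) b = lact a (ract u b).
Hypothesis T_RB : forall u v, mulA (T u) (T v) = T (u ⊛ v).

Hypothesis starA_lin : is_linear starA.
Hypothesis starAK : forall a, starA (starA a) = a.
Hypothesis starA_mul : forall a b, starA (mulA a b) = mulA (starA b) (starA a).
Hypothesis starM_lact : forall a u, starM (lact a u) = ract (starM u) (starA a).
Hypothesis starM_ract : forall a u, starM (ract u a) = lact (starA a) (starM u).
Hypothesis T_star : forall u, T (starM u) = starA (T u).

Lemma lT_bilinear : is_bilinear l_T.
Proof.
split=> [a|u]; apply: is_linear_diff => k x y /=.
- by rewrite T_lin (proj1 mulA_bilin).
- by rewrite (proj1 ract_bilin) T_lin.
- by rewrite (proj2 mulA_bilin).
- by rewrite (proj2 ract_bilin) T_lin.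
Qed.

Lemma rT_bilinear : is_bilinear r_T.
Proof.
split=> [u|a]; apply: is_linear_diff => k x y /=.
- by rewrite (proj1 mulA_bilin).
- by rewrite (proj1 lact_bilin) T_lin.
- by rewrite T_lin (proj2 mulA_bilin).
- by rewrite (proj2 lact_bilin) T_lin.
Qed.

Let TD := is_linearD T_lin.
Let TB := is_linearB T_lin.

Lemma lT_RB_mul u v a : l_T (u ⊛ v) a = l_T u (l_T v a).
Proof.
rewrite /lT -T_RB -mulA_assoc (is_bilinearBr mulA_bilin) (is_bilinearBr ract_bilin).
rewrite TB (T_RB u (ract v a)) /RB_mul (is_bilinearDl ract_bilin) !TD subrDBKl.
by rewrite ract_mul lact_ract.
Qed.

Lemma rT_RB_mul u v a : r_T a (u ⊛ v) = r_T (r_T a u) v.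
Proof.
rewrite /rT -T_RB mulA_assoc (is_bilinearBl mulA_bilin) (is_bilinearBl lact_bilin).
rewrite TB (T_RB (lact a u) v) /RB_mul (is_bilinearDr lact_bilin) !TD subrDBKr.
by rewrite lact_ract lact_mul.
Qed.

Lemma rT_lT u v a : r_T (l_T u a) v = l_T u (r_T a v).
Proof.
rewrite /rT /lT (is_bilinearBl mulA_bilin) (is_bilinearBl lact_bilin).
rewrite (is_bilinearBr mulA_bilin) (is_bilinearBr ract_bilin) !TB.
rewrite (T_RB (ract u a) v) (T_RB u (lact a v)) /RB_mul !TD subrDBKr subrDBKl.
by rewrite mulA_assoc ract_mul lact_mul.
Qed.

Lemma lT_rT_bimodule : bimodule (RB_mul lact ract T) l_T r_T.
Proof.
split; [exact: lT_bilinear | exact: rT_bilinear | exact: lT_RB_mul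
       | exact: rT_RB_mul | exact: rT_lT].
Qed.

Lemma star_lT u a : starA (l_T u a) = r_T (starA a) (starM u).
Proof. by rewrite /lT /rT (is_linearB starA_lin) starA_mul -!T_star starM_ract. Qed.

Lemma star_rT u a : starA (r_T a u) = l_T (starM u) (starA a).
Proof. by rewrite /lT /rT (is_linearB starA_lin) starA_mul -!T_star starM_lact. Qed.

Lemma lT_rT_involutive_bimodule :
  involutive_bimodule (RB_mul lact ract T) starM l_T r_T starA.
Proof.
split; [exact: lT_rT_bimodule | exact: starA_lin | exact: starAK
       | exact: star_lT | exact: star_rT].
Qed.

End RotaBaxterBimodule.

Theorem mainTheorem4 (K : fieldType) (A M : lmodType K)
  (mulA : A -> A -> A) (starA : A -> A)
  (lact : A -> M -> M) (ract : M -> A -> M) (starM : M -> M) (T : M -> A) :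
  involutive_algebra mulA starA ->
  involutive_bimodule mulA starA lact ract starM ->
  relative_RB mulA starA lact ract starM T ->
  involutive_bimodule (RB_mul lact ract T) starM
    (lT mulA ract T) (rT mulA lact T) starA.
Proof.
move=> [[mulA_bilin mulA_assoc] starA_lin starAK starA_mul].
move=> [[lact_bilin ract_bilin lact_mul ract_mul lact_ract] _ _ starM_lact
         starM_ract].
move=> [T_lin T_star T_RB].
exact: lT_rT_involutive_bimodule.
Qed.
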